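(* Let $R$ be a commutative Bezout domain of stable range 1.5, let $n\ge 2$, let $a_1,\dots,a_n\in R$ with $(a_1,\dots,a_n)=1$, let $\psi\in R$ be a fixed nonzero element, and fix an index $i$ with $2\le i\le n$. Then there exist $u_1,\dots,u_n\in R$ satisfying simultaneously: (1) $u_1a_1+\dots+u_na_n=1$; (2) $(u_1,\dots,u_i)=1$; (3) $(u_i,\psi)=1$.
   Context: A commutative Bezout domain is a commutative integral domain with $1\ne0$ in which every finitely generated ideal is principal; $(a,b,\dots)$ denotes a greatest common divisor. A commutative Bezout domain $R$ has stable range 1.5 if for all $a,b\in R$ and all $c\in R\setminus\{0\}$ with $(a,b,c)=1$ there exists $r\in R$ with $(a+br,c)=1$. *)

From HB Require Import structures.
From mathcomp Require Import all_boot all_order all_algebra.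
Set Implicit Arguments. Unset Strict Implicit. Unset Printing Implicit Defensive.
Import GRing.Theory.
Local Open Scope ring_scope.

Definition rdvd (R : idomainType) (d x : R) : Prop := exists c : R, x = c * d.

Definition gcd_one (R : idomainType) (s : seq R) : Prop :=
  forall d : R, (forall x, x \in s -> rdvd d x) -> d \is a GRing.unit.

Definition fg_ideal_principal (R : idomainType) (s : seq R) : Prop :=
  exists d : R,
    (forall x, x \in s -> rdvd d x) /\
    exists c : seq R, size c = size s /\ d = \sum_(k < size s) c`_k * s`_k.

Definition bezout_domain (R : idomainType) : Prop :=
  forall s : seq R, fg_ideal_principal s.

Definition stable_range_1_5 (R : idomainType) : Prop :=
  forall a b c : R, c != 0 -> gcd_one [:: a; b; c] ->
    exists r : R, gcd_one [:: a + b * r; c].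

From HB Require Import structures.
From mathcomp Require Import all_boot all_order all_algebra.
From mathcomp Require Import zify ring.
Set Implicit Arguments. Unset Strict Implicit. Unset Printing Implicit Defensive.
Import GRing.Theory.
Local Open Scope ring_scope.

(* Let e be a gcd of the a_j with j different from 1 and i.  Since (a_1, a_i, e) = 1,
   the problem reduces to three generators: find a_1 α + a_i β + e γ = 1 with
   (α, β) = 1 and (β, ψ) = 1, and spread γ over the a_j through a Bezout identity
   for e.  With d = (a_1, e) we have (d, a_i) = 1, say x d + y a_i = 1; stable
   range 1.5 applied to (y, d, ψ) makes β := y + d r coprime to ψ, and applied a
   second time to (α, e, β) it makes α coprime to β without touching β. *)

Section Divisibility.
Variable R : idomainType.
Implicit Types x y z g d : R.

Lemma rdvd_trans g d x : rdvd g d -> rdvd d x -> rdvd g x.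
Proof. by move=> [c ->] [c' ->]; exists (c' * c); rewrite mulrA. Qed.

Lemma rdvdD g x y : rdvd g x -> rdvd g y -> rdvd g (x + y).
Proof. by move=> [c ->] [c' ->]; exists (c + c'); rewrite mulrDl. Qed.

Lemma rdvdMl g x y : rdvd g x -> rdvd g (y * x).
Proof. by move=> [c ->]; exists (y * c); rewrite mulrA. Qed.

Lemma rdvd1_unit g : rdvd g 1 -> g \is a GRing.unit.
Proof. by move=> [c Hc]; apply/unitrP; exists c; rewrite [g * c]mulrC -Hc. Qed.

Lemma gcd_one_sub (s t : seq R) : {subset s <= t} -> gcd_one s -> gcd_one t.
Proof. by move=> st Hs g Hg; apply: Hs => x /st; apply: Hg. Qed.

Lemma gcd_one_mem1 (s : seq R) : 1 \in s -> gcd_one s.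
Proof. by move=> s1 g Hg; apply/rdvd1_unit/Hg. Qed.

Lemma gcd_one2P x y :
  gcd_one [:: x; y] <-> forall g, rdvd g x -> rdvd g y -> g \is a GRing.unit.
Proof.
split=> [H g gx gy | H g Hg]; last by apply: H; apply: Hg; rewrite !inE eqxx ?orbT.
by apply: H => z; rewrite !inE => /orP[] /eqP ->.
Qed.

Lemma gcd_one3P x y z :
  gcd_one [:: x; y; z] <->
  forall g, rdvd g x -> rdvd g y -> rdvd g z -> g \is a GRing.unit.
Proof.
split=> [H g gx gy gz | H g Hg]; last by apply: H; apply: Hg; rewrite !inE eqxx ?orbT.
by apply: H => w; rewrite !inE => /or3P[] /eqP ->.
Qed.

Lemma gcd_one3_comb u v w x y z : u * x + v * y + w * z = 1 -> gcd_one [:: x; y; z].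
Proof.
move=> Huvw; apply/gcd_one3P => g gx gy gz; apply: rdvd1_unit.
by rewrite -Huvw; apply: rdvdD; [apply: rdvdD|]; apply: rdvdMl.
Qed.

End Divisibility.

Section Bezout.
Variable R : idomainType.
Hypothesis hB : bezout_domain R.
Implicit Types x y : R.

Lemma bezout_gcd_nat (f : nat -> R) (m n : nat) :
  exists e (w : nat -> R), (forall j, (m <= j < n)%N -> rdvd e (f j)) /\
                           e = \sum_(m <= j < n) w j * f j.
Proof.
have [e [He [c [Hcs Hec]]]] := hB [seq f j | j <- iota m (n - m)].
exists e, (fun j => c`_(j - m)); split.
  by move=> j Hj; apply: He; apply: map_f; rewrite mem_iota; lia.
rewrite Hec size_map size_iota -[in RHS](add0n m) big_addn big_mkord.
by apply: eq_bigr => k _; rewrite addnK (nth_map 0%N) ?size_iota // nth_iota // addnC.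
Qed.

Lemma bezout_gcd2 x y :
  exists d p q, [/\ rdvd d x, rdvd d y & d = p * x + q * y].
Proof.
have [d [w [Hdw Hd]]] := bezout_gcd_nat (fun j => if j == 0%N then x else y) 0 2.
exists d, (w 0%N), (w 1%N).
split; [exact: (Hdw 0%N) | exact: (Hdw 1%N) |].
by rewrite Hd big_nat_recl // big_nat1.
Qed.

Lemma gcd_one2_bezout x y : gcd_one [:: x; y] -> exists p q, p * x + q * y = 1.
Proof.
move=> /gcd_one2P Hxy; have [d [p [q [dx dy Hd]]]] := bezout_gcd2 x y.
have Ud := Hxy d dx dy.
by exists (d^-1 * p), (d^-1 * q); rewrite -!mulrA -mulrDr -Hd mulVr.
Qed.

End Bezout.

Section StableRange.
Variable R : idomainType.
Hypothesis hB : bezout_domain R.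
Hypothesis hS : stable_range_1_5 R.
Implicit Types a b e psi : R.

Lemma coeff_coprime_psi a b e psi : psi != 0 -> gcd_one [:: a; b; e] ->
  exists al be ga, al * a + be * b + ga * e = 1 /\ gcd_one [:: be; psi].
Proof.
move=> psi0 /gcd_one3P Habe.
have [d [p [q [da de Hd]]]] := bezout_gcd2 hB a e.
have [x [y Hxy]] : exists x y, x * d + y * b = 1.
  apply/gcd_one2_bezout/gcd_one2P => // g gd gb.
  by apply: Habe => //; apply: rdvd_trans gd _.
have [r Hr] : exists r, gcd_one [:: y + d * r; psi].
  by apply: hS => //; apply: (@gcd_one3_comb _ b x 0); rewrite -Hxy; ring.
exists ((x - r * b) * p), (y + d * r), ((x - r * b) * q); split=> //.
by rewrite -Hxy Hd; ring.
Qed.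

Lemma coeff_coprime_adjust a b e al be ga : be != 0 ->
  al * a + be * b + ga * e = 1 ->
  exists al' ga', al' * a + be * b + ga' * e = 1 /\ gcd_one [:: al'; be].
Proof.
move=> be0 Hsum.
have [s Hs] : exists s, gcd_one [:: al + e * s; be].
  by apply: hS => //; apply: (@gcd_one3_comb _ a ga b); rewrite -Hsum; ring.
by exists (al + e * s), (ga - s * a); split=> //; rewrite -Hsum; ring.
Qed.

Lemma unimodular3_coprime_coeffs a b e psi : psi != 0 -> gcd_one [:: a; b; e] ->
  exists al be ga,
    [/\ al * a + be * b + ga * e = 1, gcd_one [:: al; be] & gcd_one [:: be; psi]].
Proof.
move=> psi0 Habe; have [al [be [ga [Hsum Hpsi]]]] := coeff_coprime_psi psi0 Habe.
have [be0|be0] := eqVneq be 0.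
  (* stable range cannot be applied with modulus 0; but now a and e generate the
     unit ideal, so b may get coefficient 1 *)
  exists (al * (1 - b)), 1, (ga * (1 - b)).
  split; try by apply: gcd_one_mem1; rewrite !inE eqxx ?orbT.
  move: Hsum; rewrite be0 mul0r addr0 => Hsum.
  transitivity ((al * a + ga * e) * (1 - b) + b); first by ring.
  by rewrite Hsum; ring.
have [al' [ga' [Hsum' Halbe]]] := coeff_coprime_adjust be0 Hsum.
by exists al', be, ga'.
Qed.

End StableRange.

Lemma sum_coeffs_split (R : comPzRingType) (n i : nat) (a w : nat -> R) (al be ga : R) :
  (2 <= i <= n)%N ->
  \sum_(1 <= j < n.+1) (if j == 1%N then al else if j == i then be else ga * w j) * a j
  = al * a 1%N + be * a i + ga * \sum_(2 <= j < n.+1) w j * (if j == i then 0 else a j).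
Proof.
move=> hi; rewrite big_ltn; last lia.
rewrite eqxx -addrA mulr_sumr; congr (_ + _).
rewrite (eq_big_nat _ _ (F2 := fun j =>
  (if j == i then be * a i else 0) + ga * (w j * (if j == i then 0 else a j)))).
  by rewrite big_split /= -big_mkcond big_nat1_eq ifT //; lia.
move=> j Hj; have -> : (j == 1%N) = false by apply/eqP; lia.
by case: eqVneq => [->|_]; rewrite ?mulr0 ?addr0 ?add0r ?mulrA.
Qed.

Theorem theorem1p9 (R : idomainType) (hB : bezout_domain R)
  (hS : stable_range_1_5 R) (n : nat) (hn : (2 <= n)%N) (a : nat -> R)
  (ha : gcd_one [seq a j | j <- iota 1 n]) (psi : R) (hpsi : psi != 0)
  (i : nat) (hi : (2 <= i <= n)%N) :
  exists u : nat -> R,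
    [/\ \sum_(1 <= j < n.+1) u j * a j = 1,
        gcd_one [seq u j | j <- iota 1 i] &
        gcd_one [:: u i; psi]].
Proof.
pose b j := if j == i then 0 else a j.
have [e [w [He Hew]]] := bezout_gcd_nat hB b 2 n.+1.
have Ha1ie : gcd_one [:: a 1%N; a i; e].
  apply/gcd_one3P => g g1 gi ge; apply: ha => x /mapP [j]; rewrite mem_iota => Hj ->.
  have [->|j1] := eqVneq j 1%N; first done.
  have [->|ji] := eqVneq j i; first done.
  by apply: rdvd_trans ge _; have := He j; rewrite /b (negbTE ji); apply; lia.
have [al [be [ga [Hsum Halbe Hbepsi]]]] :=
  unimodular3_coprime_coeffs hB hS hpsi Ha1ie.
have i1 : (i == 1%N) = false by apply/eqP; lia.
exists (fun j => if j == 1%N then al else if j == i then be else ga * w j).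
split; last by rewrite i1 eqxx.
  by rewrite sum_coeffs_split // -Hew.
apply: gcd_one_sub Halbe => x; rewrite !inE => /orP[] /eqP ->; apply/mapP.
  by exists 1%N; rewrite ?mem_iota //; lia.
by exists i; rewrite ?mem_iota ?i1 ?eqxx //; lia.
Qed.
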